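(* (Setting as in the context.) Let $\bar u\in\mathcal U$, $\bar y\in\mathcal Y$, $\bar v\in\mathcal V$, $\bar z\in\mathcal Z$, $\bar x\in\mathcal X$ be given and $\bar\gamma:=-\Gamma(\bar u,\bar y,\bar v,\bar z)$. Define, with $\mathcal A_0:=\mathcal F$, $$\bar\beta_{p,j}:=\mathcal A_{j-1}\mathcal A_p^*\mathcal E_{\theta_p}^{-1}(b_p-\mathcal A_p\bar x-\mathcal P_p\bar y_p+\sigma\mathcal A_p\bar\gamma),\quad j=1,\dots,p,$$ and for $i=p-1,\dots,1$, $$\bar\beta_{i,j}:=\mathcal A_{j-1}\mathcal A_i^*\mathcal E_{\theta_i}^{-1}\Big(b_i-\sum_{k=i+1}^p\bar\beta_{k,i+1}-\mathcal A_i\bar x-\mathcal P_i\bar y_i+\sigma\mathcal A_i\bar\gamma\Big),\quad j=1,\dots,i,$$ and $\bar\delta_\theta:=\sum_{i=1}^p\bar\beta_{i,1}\in\mathcal U$. For $i=p,p-1,\dots,1$ define (with $y'_{\ge p+1}$ empty) $$y'_i:=\operatorname{argmin}_{y_i}\ \mathcal L_\sigma(\bar u,(\bar y_{\le i-1},y_i,y'_{\ge i+1}),\bar v,\bar z;\bar x)+\tfrac\sigma2\|y_i-\bar y_i\|^2_{\mathcal T_{\theta_i}}.$$ Let $$(u^+,y^+):=\operatorname{argmin}_{u,y}\ \mathcal L_\sigma(u,y,\bar v,\bar z;\bar x)+\tfrac\sigma2\|(u,y_{\le p-1})-(\bar u,\bar y_{\le p-1})\|^2_{\widehat{\mathcal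 T}_{f_p}}+\tfrac\sigma2\|y_p-\bar y_p\|^2_{\mathcal T_{\theta_p}}.$$ Then $(u^+,y^+)$ is obtained exactly by $$u^+=\operatorname{argmin}_u\ \mathcal L_\sigma(u,\bar y,\bar v,\bar z;\bar x)+\langle\bar\delta_\theta,u\rangle+\tfrac\sigma2\|u-\bar u\|^2_{\mathcal T_f},$$ $$y_i^+=\operatorname{argmin}_{y_i}\ \mathcal L_\sigma(u^+,(y^+_{\le i-1},y_i,y'_{\ge i+1}),\bar v,\bar z;\bar x)+\tfrac\sigma2\|y_i-\bar y_i\|^2_{\mathcal T_{\theta_i}},\quad i=1,\dots,p,$$ and also, equivalently, by $$u^+=\operatorname{argmin}_u\ \mathcal L_\sigma(u,y',\bar v,\bar z;\bar x)+\tfrac\sigma2\|u-\bar u\|^2_{\mathcal T_f},$$ $$y_i^+=\operatorname{argmin}_{y_i}\ \mathcal L_\sigma(u^+,(y^+_{\le i-1},y_i,y'_{\ge i+1}),\bar v,\bar z;\bar x)+\tfrac\sigma2\|y_i-\bar y_i\|^2_{\mathcal T_{\theta_i}},\quad i=1,\dots,p.$$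
   Context: Let $p,q\ge1$ be integers and $\mathcal U,\mathcal V,\mathcal X,\mathcal Y_1,\dots,\mathcal Y_p,\mathcal Z_1,\dots,\mathcal Z_q$ real finite-dimensional Euclidean spaces, $\mathcal Y=\mathcal Y_1\times\dots\times\mathcal Y_p$, $\mathcal Z=\mathcal Z_1\times\dots\times\mathcal Z_q$. Let $f:\mathcal U\to(-\infty,+\infty]$, $g:\mathcal V\to(-\infty,+\infty]$ be closed proper convex; $\mathcal F:\mathcal X\to\mathcal U$, $\mathcal G:\mathcal X\to\mathcal V$, $\mathcal A_i:\mathcal X\to\mathcal Y_i$, $\mathcal B_j:\mathcal X\to\mathcal Z_j$ linear; $c\in\mathcal X$; $\theta_i(y_i)=\frac12\langle y_i,\mathcal P_iy_i\rangle-\langle b_i,y_i\rangle$, $\varphi_j(z_j)=\frac12\langle z_j,\mathcal Q_jz_j\rangle-\langle d_j,z_j\rangle$ with $\mathcal P_i,\mathcal Q_j$ self-adjoint positive semidefinite. Write $\mathcal A^*y=\sum_i\mathcal A_i^*y_i$, $\mathcal B^*z=\sum_j\mathcal B_j^*z_j$, $\Gamma(u,y,v,z):=\mathcal F^*u+\mathcal A^*y+\mathcal G^*v+\mathcal B^*z-c$, and for $\sigma>0$ $$\mathcal L_\sigma(u,y,v,z;x):=f(u)+\sum_i\theta_i(y_i)+g(v)+\sum_j\varphi_j(z_j)+\langle x,\Gamma(u,y,v,z)\rangle+\tfrac\sigma2\|\Gamma(u,y,v,z)\|^2.$$ For each $i$, $\mathcal E_{\theta_i}$ is a self-adjoint positive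 definite operator on $\mathcal Y_i$ with $\mathcal E_{\theta_i}\succeq\sigma^{-1}\mathcal P_i+\mathcal A_i\mathcal A_i^*$ and $\mathcal T_{\theta_i}:=\mathcal E_{\theta_i}-\sigma^{-1}\mathcal P_i-\mathcal A_i\mathcal A_i^*$. $\mathcal T_f$ is a self-adjoint positive semidefinite operator on $\mathcal U$. Notation: $y_{\le i}=(y_1,\dots,y_i)$, $y_{\ge i}=(y_i,\dots,y_p)$ (empty if out of range); $\|w\|^2_{\mathcal T}=\langle w,\mathcal Tw\rangle$. Let $\mathcal F_1:=\mathcal F$ and, for $i=1,\dots,p$, $\mathcal F_{i+1}:\mathcal X\to\mathcal U\times\mathcal Y_1\times\dots\times\mathcal Y_i$, $\mathcal F_{i+1}x=(\mathcal Fx,\mathcal A_1x,\dots,\mathcal A_ix)$. Define $\widehat{\mathcal T}_{f_1}:=\mathcal T_f+\mathcal F_1\mathcal A_1^*\mathcal E_{\theta_1}^{-1}\mathcal A_1\mathcal F_1^*$ and for $i=2,\dots,p$, $\widehat{\mathcal T}_{f_i}:=\mathrm{diag}(\widehat{\mathcal T}_{f_{i-1}},\mathcal T_{\theta_{i-1}})+\mathcal F_i\mathcal A_i^*\mathcal E_{\theta_i}^{-1}\mathcal A_i\mathcal F_i^*$ (an operator on $\mathcal U\times\mathcal Y_1\times\dots\times\mathcal Y_{i-1}$). *)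

From HB Require Import structures.
From mathcomp Require Import all_boot all_order all_algebra.
From mathcomp Require Import all_classical all_reals ereal topology normedtype sequences.
Set Implicit Arguments. Unset Strict Implicit. Unset Printing Implicit Defensive.
Import Order.TTheory GRing.Theory Num.Theory.
Import numFieldNormedType.Exports.
Local Open Scope ring_scope.

(* A real finite-dimensional Euclidean space of dimension n is
   represented by column vectors 'cV[R]_n with the standard inner product
   (every such space is isometric to one of these).  A linear map
   L : R^m -> R^n is an n x m matrix acting by  x |-> L *m x ; its adjoint
   is the transpose. *)

Section Basic.
Variable R : realType.

Definition ip {n} (a b : 'cV[R]_n) : R := (a^T *m b) 0 0.
Definition qn {n} (T : 'M[R]_n) (a : 'cV[R]_n) : R := ip a (T *m a).

Definition selfadjoint {n} (T : 'M[R]_n) : Prop := T^T = T.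
Definition psd {n} (T : 'M[R]_n) : Prop :=
  selfadjoint T /\ forall a : 'cV[R]_n, 0 <= qn T a.
Definition pd {n} (T : 'M[R]_n) : Prop :=
  selfadjoint T /\ forall a : 'cV[R]_n, a != 0 -> 0 < qn T a.

Definition proper_fun {n} (h : 'cV[R]_n -> \bar R) : Prop :=
  (forall x, h x != -oo%E) /\ (exists x, h x != +oo%E).
Definition convex_fun {n} (h : 'cV[R]_n -> \bar R) : Prop :=
  forall (x y : 'cV[R]_n) (t : R), 0 <= t <= 1 ->
    (h ((t *: x + (1 - t) *: y)%R) <= t%:E * h x + ((1 - t)%R)%:E * h y)%E.
(* closed = the epigraph {(x,a) | h x <= a} is a closed subset of R^n x R
   (stated sequentially; convergence of vectors is entrywise). *)
Definition closed_fun {n} (h : 'cV[R]_n -> \bar R) : Prop :=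
  forall (xs : nat -> 'cV[R]_n) (al : nat -> R) (x : 'cV[R]_n) (a : R),
    (forall k, (h (xs k) <= (al k)%:E)%E) ->
    (forall i j, ((fun k => xs k i j) @ \oo --> x i j)%classic) ->
    (al @ \oo --> a)%classic ->
    (h x <= a%:E)%E.

Definition is_argmin {T : Type} (phi : T -> \bar R) (x : T) : Prop :=
  forall y, (phi x <= phi y)%E.

End Basic.

Record data (R : realType) := Data {
  dU : nat; dV : nat; dX : nat;
  p : nat; q : nat;
  dY : 'I_p -> nat;            (* dim Y_(i+1), 0-based block index i *)
  dZ : 'I_q -> nat;
  f : 'cV[R]_dU -> \bar R;
  g : 'cV[R]_dV -> \bar R;
  Fo : 'M[R]_(dU, dX);
  Go : 'M[R]_(dV, dX);
  Ao : forall i, 'M[R]_(dY i, dX);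
  Bo : forall j, 'M[R]_(dZ j, dX);
  c : 'cV[R]_dX;
  Po : forall i, 'M[R]_(dY i);
  bv : forall i, 'cV[R]_(dY i);
  Qo : forall j, 'M[R]_(dZ j);
  dv : forall j, 'cV[R]_(dZ j);
  sigma : R;
  Eth : forall i, 'M[R]_(dY i);
  Tf : 'M[R]_dU }.
Arguments dY {R} d i.
Arguments dU {R} d.
Arguments dV {R} d.
Arguments dX {R} d.
Arguments p {R} d.
Arguments q {R} d.
Arguments f {R} d.
Arguments g {R} d.
Arguments Fo {R} d.
Arguments Go {R} d.
Arguments c {R} d.
Arguments sigma {R} d.
Arguments Tf {R} d.
Arguments dZ {R} d j.
Arguments Ao {R} d i.
Arguments Bo {R} d j.
Arguments Po {R} d i.
Arguments bv {R} d i.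
Arguments Qo {R} d j.
Arguments dv {R} d j.
Arguments Eth {R} d i.

Unset Implicit Arguments.
Section Setting.
Context {R : realType}.
Variable D : data R.

Local Notation p := (p D).
Local Notation q := (q D).

Definition Ysp := forall i : 'I_p, 'cV[R]_(dY D i).
Definition Zsp := forall j : 'I_q, 'cV[R]_(dZ D j).

Definition Gamma (u : 'cV[R]_(dU D)) (y : Ysp) (v : 'cV[R]_(dV D)) (z : Zsp)
  : 'cV[R]_(dX D) :=
  (Fo D)^T *m u + \sum_(i < p) (Ao D i)^T *m y i + (Go D)^T *m v
  + \sum_(j < q) (Bo D j)^T *m z j - c D.

Definition theta (i : 'I_p) (yi : 'cV[R]_(dY D i)) : R :=
  2^-1 * ip yi (Po D i *m yi) - ip (bv D i) yi.
Definition varphi (j : 'I_q) (zj : 'cV[R]_(dZ D j)) : R :=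
  2^-1 * ip zj (Qo D j *m zj) - ip (dv D j) zj.

Definition Lsig (u : 'cV[R]_(dU D)) (y : Ysp) (v : 'cV[R]_(dV D)) (z : Zsp)
  (x : 'cV[R]_(dX D)) : \bar R :=
  (f D u + (\sum_(i < p) theta i (y i))%:E + g D v
   + (\sum_(j < q) varphi j (z j) + ip x (Gamma u y v z)
      + sigma D / 2 * ip (Gamma u y v z) (Gamma u y v z))%:E)%E.

Definition Ttheta (i : 'I_p) : 'M[R]_(dY D i) :=
  Eth D i - ((sigma D)^-1 *: Po D i + Ao D i *m (Ao D i)^T).

Definition upd (y : Ysp) (i : 'I_p) (yi : 'cV[R]_(dY D i)) : Ysp :=
  fun k => match i =P k with
           | ReflectT e => castmx (congr1 (dY D) e, erefl 1%N) yi
           | ReflectF _ => y k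
           end.

(* (a_{<= i-1}, yi, b_{>= i+1}) , blocks numbered from 0 here *)
Definition blk (a b : Ysp) (i : 'I_p) (yi : 'cV[R]_(dY D i)) : Ysp :=
  upd (fun k => if (k < i)%N then a k else b k) i yi.

(* W := U x Y_1 x ... x Y_p ;  the space U x Y_1 x ... x Y_{i-1} is
   identified with the elements of W whose blocks Y_k, k >= i, are 0. *)
Definition W := ('cV[R]_(dU D) * Ysp)%type.
Definition addW (a b : W) : W := (a.1 + b.1, fun k : 'I_p => a.2 k + b.2 k).
Definition ipW (a b : W) : R := ip a.1 b.1 + \sum_(k < p) ip (a.2 k) (b.2 k).
(* keep U and the blocks Y_1 .. Y_{n-1} (0-based k with k+1 < n) *)
Definition truncW (n : nat) (w : W) : W :=
  (w.1, fun k : 'I_p => if (k.+1 < n)%N then w.2 k else 0).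

(* F_n^* w = F^* w_u + sum_{k=1}^{n-1} A_k^* w_k  (1-based n) *)
Definition Fstar (n : nat) (w : W) : 'cV[R]_(dX D) :=
  (Fo D)^T *m w.1 + \sum_(k < p | (k.+1 < n)%N) (Ao D k)^T *m w.2 k.
Definition Fmap (n : nat) (x : 'cV[R]_(dX D)) : W :=
  (Fo D *m x, fun k : 'I_p => if (k.+1 < n)%N then Ao D k *m x else 0).
(* F_n A_n^* E_theta_n^-1 A_n F_n^* w   (1-based n, 1 <= n <= p) *)
Definition corr (n : nat) (w : W) : W :=
  match (insub n.-1 : option 'I_p) with
  | Some i => Fmap n ((Ao D i)^T *m (invmx (Eth D i) *m (Ao D i *m Fstar n w)))
  | None => (0, fun _ : 'I_p => 0)
  end.

(* Hat m = hat T_{f_{m+1}} :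
   hat T_{f_1} = T_f + F_1 A_1^* E_1^-1 A_1 F_1^*,
   hat T_{f_i} = diag(hat T_{f_{i-1}}, T_theta_{i-1}) + F_i A_i^* E_i^-1 A_i F_i^*. *)
Fixpoint Hat (m : nat) (w : W) : W :=
  match m with
  | 0 => addW (Tf D *m w.1, fun _ : 'I_p => 0) (corr 1 w)
  | m'.+1 =>
      addW ((Hat m' w).1,
            fun k : 'I_p => if (k == m' :> nat) then Ttheta k *m w.2 k else (Hat m' w).2 k)
           (corr m.+1 w)
  end.

Section Beta.
Variables (xbar : 'cV[R]_(dX D)) (ybar : Ysp) (gam : 'cV[R]_(dX D)).
Definition sres (i : 'I_p) (s' : 'I_p -> 'cV[R]_(dX D)) : 'cV[R]_(dX D) :=
  (Ao D i)^T *m (invmx (Eth D i) *m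
     (bv D i - \sum_(k < p | (i < k)%N) (Ao D i *m s' k) - Ao D i *m xbar
      - Po D i *m ybar i + sigma D *: (Ao D i *m gam))).
(* backward recursion: sfun n computes the blocks k >= p - n *)
Fixpoint sfun (n : nat) : 'I_p -> 'cV[R]_(dX D) :=
  match n with
  | 0 => fun _ : 'I_p => 0
  | n'.+1 => let s' := sfun n' in
             fun i => if (i == (p - n'.+1)%N :> nat) then sres i s' else s' i
  end.
(* s i = A_i^* E_i^-1 ( ... ), so that beta-bar_{i,j} = A_{j-1} (s i), A_0 = F *)
Definition sbar : 'I_p -> 'cV[R]_(dX D) := sfun p.
Definition betaU (i : 'I_p) : 'cV[R]_(dU D) := Fo D *m sbar i.
(* beta-bar_{k,i+1}  (lies in Y_i) *)
Definition betaY (k i : 'I_p) : 'cV[R]_(dY D i) := Ao D i *m sbar k.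
Definition deltabar : 'cV[R]_(dU D) := \sum_(i < p) betaU i.
End Beta.

End Setting.

Definition last_block {p : nat} (hp : (0 < p)%N) : 'I_p :=
  Ordinal (etrans (ltn_predL p) hp).

(* Write d_u = u - ubar, d_i = y_i - ybar_i and s_i = F^* d_u + sum_(k<i) A_k^* d_k.
   Expanding L_sigma and the proximal term of hat T_(f_p) block by block and
   completing the square in each d_i with E_theta_i gives
     joint(u, y) = f u + Phi u + sum_i sg/2 ||d_i - m_i||^2_(E_theta_i) + const,
   where f + Phi is the u-subproblem carrying the correction <delta, u>, and the
   centre m_i depends only on u and d_(<i): the cross terms involving
   sbar_i := A_i^* E_theta_i^-1 (...), with beta_(i,j) = A_(j-1) sbar_i, cancel
   between blocks.  The gap sum is nonnegative and vanishes after forward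
   substitution, so (u+, y+) is a joint minimiser iff u+ minimises f + Phi and the
   gap vanishes at (u+, y+).  The backward sweep satisfies
   sg A_i^* (y'_i - ybar_i) = sbar_i; hence every forward y_i-subproblem is a
   strongly convex quadratic centred at ybar_i + m_i, i.e. the forward steps say
   exactly that the gap vanishes, and L_sigma(u, y') + sg/2 ||u - ubar||^2_(T_f)
   differs from f u + Phi u by a constant. *)

From Pilot Require Import Defs.
From HB Require Import structures.
From mathcomp Require Import all_boot all_order all_algebra.
From mathcomp Require Import all_classical all_reals ereal topology normedtype sequences.
From mathcomp Require Import ring lra zify.
Import Order.TTheory GRing.Theory Num.Theory.
Import numFieldNormedType.Exports.
Local Open Scope ring_scope.

Section InnerProduct.
Context {R : realType}.

Lemma ipC {n} (a b : 'cV[R]_n) : ip a b = ip b a.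
Proof. by rewrite /ip -[in RHS](trmxK (b^T *m a)) trmx_mul trmxK [in RHS]mxE. Qed.

Lemma ipDr {n} (a b c : 'cV[R]_n) : ip a (b + c) = ip a b + ip a c.
Proof. by rewrite /ip mulmxDr mxE. Qed.

Lemma ipDl {n} (a b c : 'cV[R]_n) : ip (a + b) c = ip a c + ip b c.
Proof. by rewrite ipC ipDr !(ipC _ c). Qed.

Lemma ipZr {n} k (a b : 'cV[R]_n) : ip a (k *: b) = k * ip a b.
Proof. by rewrite /ip -scalemxAr mxE. Qed.

Lemma ipZl {n} k (a b : 'cV[R]_n) : ip (k *: a) b = k * ip a b.
Proof. by rewrite ipC ipZr ipC. Qed.

Lemma ipNr {n} (a b : 'cV[R]_n) : ip a (- b) = - ip a b.
Proof. by rewrite -scaleN1r ipZr mulN1r. Qed.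

Lemma ipNl {n} (a b : 'cV[R]_n) : ip (- a) b = - ip a b.
Proof. by rewrite ipC ipNr ipC. Qed.

Lemma ipBr {n} (a b c : 'cV[R]_n) : ip a (b - c) = ip a b - ip a c.
Proof. by rewrite ipDr ipNr. Qed.

Lemma ipBl {n} (a b c : 'cV[R]_n) : ip (a - b) c = ip a c - ip b c.
Proof. by rewrite ipDl ipNl. Qed.

Lemma ip0r {n} (a : 'cV[R]_n) : ip a 0 = 0.
Proof. by rewrite /ip mulmx0 mxE. Qed.

Lemma ip_sumr {n} (I : Type) (r : seq I) (P : pred I) (F : I -> 'cV[R]_n) a :
  ip a (\sum_(i <- r | P i) F i) = \sum_(i <- r | P i) ip a (F i).
Proof. by rewrite /ip mulmx_sumr summxE. Qed.

Lemma ip_suml {n} (I : Type) (r : seq I) (P : pred I) (F : I -> 'cV[R]_n) a :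
  ip (\sum_(i <- r | P i) F i) a = \sum_(i <- r | P i) ip (F i) a.
Proof. by rewrite ipC ip_sumr; apply: eq_bigr => i _; rewrite ipC. Qed.

Lemma ip_mulmxr {m n} (M : 'M[R]_(m, n)) a b : ip a (M *m b) = ip (M^T *m a) b.
Proof. by rewrite /ip trmx_mul trmxK mulmxA. Qed.

Lemma ip_trmx_mulmxr {m n} (M : 'M[R]_(m, n)) a b : ip a (M^T *m b) = ip (M *m a) b.
Proof. by rewrite ip_mulmxr trmxK. Qed.

Lemma ip_self_addr {n} (a b : 'cV[R]_n) :
  ip (a + b) (a + b) = ip a a + 2 * ip a b + ip b b.
Proof. rewrite !ipDl !ipDr (ipC b a); ring. Qed.

Lemma ip_self_addr_sum {n} k (b : 'cV[R]_n) (a : 'I_k -> 'cV[R]_n) :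
  ip (b + \sum_i a i) (b + \sum_i a i) =
  ip b b + \sum_i (2 * ip (a i) (b + \sum_(j < k | (j < i)%N) a j) + ip (a i) (a i)).
Proof.
elim: k a => [|k IH] a; first by rewrite !big_ord0 !addr0.
rewrite !big_ord_recr /= addrA ip_self_addr IH -!addrA; congr (_ + (_ + _)).
  apply: eq_bigr => i _; congr (2 * ip _ (b + _) + _).
  by rewrite big_mkcond [RHS]big_mkcond big_ord_recr /= ltnNge ltnW /= ?addr0.
rewrite ipC [in RHS](big_mkcond (fun j : 'I_k.+1 => (j < k)%N)) big_ord_recr /= ltnn addr0.
by congr (2 * ip _ (b + _) + _); apply: eq_bigr => i _; rewrite ltn_ord.
Qed.

Lemma qn0 {n} (M : 'M[R]_n) : qn M 0 = 0.
Proof. by rewrite /qn mulmx0 ip0r. Qed.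

Lemma qnB {n} (M N : 'M[R]_n) a : qn (M - N) a = qn M a - qn N a.
Proof. by rewrite /qn mulmxBl ipBr. Qed.

Lemma qnD {n} (M N : 'M[R]_n) a : qn (M + N) a = qn M a + qn N a.
Proof. by rewrite /qn mulmxDl ipDr. Qed.

Lemma qnZ {n} k (M : 'M[R]_n) a : qn (k *: M) a = k * qn M a.
Proof. by rewrite /qn -scalemxAl ipZr. Qed.

Lemma qn_gram {n m} (A : 'M[R]_(n, m)) a : qn (A *m A^T) a = ip (A^T *m a) (A^T *m a).
Proof. by rewrite /qn -mulmxA ip_mulmxr. Qed.

Lemma qn_invmx_sub {n} (E : 'M[R]_n) (d v : 'cV[R]_n) : E^T = E -> E \in unitmx ->
  qn E (d - invmx E *m v) = qn E d - 2 * ip d v + qn (invmx E) v.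
Proof.
move=> sE uE; have -> : qn (invmx E) v = ip (invmx E *m v) v by rewrite /qn ipC.
rewrite /qn mulmxBr mulKVmx // !(ipBl, ipBr) [ip (invmx E *m v) _]ip_mulmxr sE mulKVmx //.
rewrite (ipC v d); ring.
Qed.

(* [rho] need not be [r]: the joint expansion completes the square around the
   backward-corrected right-hand side. *)
Lemma complete_square {n m} (E P : 'M[R]_n) (A : 'M[R]_(n, m)) (r rho d : 'cV[R]_n)
    (s : 'cV[R]_m) (sg : R) : E^T = E -> E \in unitmx -> sg != 0 ->
  2^-1 * qn P d - ip r d + sg * ip (A^T *m d) s + sg / 2 * ip (A^T *m d) (A^T *m d)
  + sg / 2 * qn (E - (sg^-1 *: P + A *m A^T)) d + sg / 2 * qn (invmx E) (A *m s)
  = sg / 2 * qn E (d - invmx E *m (sg^-1 *: rho - A *m s))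
    - (2 * sg)^-1 * qn (invmx E) rho + ip (A^T *m (invmx E *m rho)) s - ip (r - rho) d.
Proof.
move=> sE uE sg0.
have symEi a b : ip a (invmx E *m b) = ip b (invmx E *m a).
  by rewrite ip_mulmxr trmx_inv sE ipC.
have cross : ip (A^T *m (invmx E *m rho)) s = ip rho (invmx E *m (A *m s)).
  by rewrite -ip_mulmxr ipC symEi.
rewrite qn_invmx_sub // qnB qnD qnZ qn_gram /qn mulmxBr -scalemxAr cross.
rewrite !(ipBl, ipBr, ipZl, ipZr) (ipC d rho) (symEi (A *m s) rho) (ip_mulmxr A d s).
by field.
Qed.

End InnerProduct.

Section PositiveDefinite.
Context {R : realType} {n : nat} {E : 'M[R]_n}.
Hypothesis pdE : pd E.

Lemma pd_qn_ge0 a : 0 <= qn E a.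
Proof. by case: (eqVneq a 0) => [->|/(proj2 pdE)/ltW //]; rewrite qn0. Qed.

Lemma pd_qn_eq0 a : qn E a = 0 -> a = 0.
Proof.
by move=> Ea0; apply/eqP; apply: contraT => /(proj2 pdE); rewrite Ea0 ltxx.
Qed.

Lemma pd_unitmx : E \in unitmx.
Proof.
rewrite -row_free_unit; apply: inj_row_free => v Ev0.
have Evt : E *m v^T = 0 by rewrite -[E](proj1 pdE) -trmx_mul Ev0 trmx0.
have : v^T = 0 by apply: pd_qn_eq0; rewrite /qn Evt ip0r.
by move/(congr1 trmx); rewrite trmxK trmx0.
Qed.

End PositiveDefinite.

Section Argmin.
Context {R : realType}.
Local Open Scope ereal_scope.

Lemma is_argmin_quadratic {n} (E : 'M[R]_n) (phi : 'cV[R]_n -> \bar R) (e : \bar R)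
    (c sg : R) (m0 x : 'cV[R]_n) :
  e \is a fin_num -> pd E -> (0 < sg)%R ->
  (forall x, phi x = e + (c + sg / 2 * qn E (x - m0))%:E) ->
  is_argmin phi x <-> x = m0.
Proof.
move=> /fineK <- pdE sg0 phiE; have sg20 : (0 < sg / 2)%R by rewrite divr_gt0.
split=> [xmin|-> y]; rewrite /is_argmin.
  have := xmin m0; rewrite !phiE subrr qn0 mulr0 addr0 -!EFinD lee_fin lerD2l gerDl.
  move=> Ex; apply/eqP; rewrite -subr_eq0; apply/eqP; apply: (pd_qn_eq0 pdE).
  by apply/eqP; rewrite eq_le pd_qn_ge0 // andbT -(pmulr_rle0 _ sg20).
rewrite !phiE subrr qn0 mulr0 addr0 -!EFinD lee_fin lerD2l lerDl.
by rewrite mulr_ge0 ?pd_qn_ge0 // ltW.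
Qed.

Lemma is_argmin_addr_cst {T : Type} (e : T -> \bar R) (phi : T -> R) (k : R) x :
  is_argmin (fun u => e u + (phi u + k)%:E) x <-> is_argmin (fun u => e u + (phi u)%:E) x.
Proof.
by rewrite /is_argmin; split=> xmin u; have := xmin u; rewrite !EFinD !addeA leeD2rE.
Qed.

Lemma is_argmin_fin_num {T : Type} (e : T -> \bar R) (phi : T -> R) x :
  (forall u, e u != -oo) -> (exists u, e u != +oo) ->
  is_argmin (fun u => e u + (phi u)%:E) x -> e x \is a fin_num.
Proof.
move=> eN [u eu] xmin; rewrite fin_numE eN /=; apply: contra eu => /eqP ex.
by have := xmin u; rewrite ex; case: (e u) (eN u).
Qed.

Lemma is_argmin_add_nonneg {U Y : Type} (e : U -> \bar R) (phi : U -> R)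
    (S : U -> Y -> R) u0 y0 :
  (forall u, e u != -oo) -> (exists u, e u != +oo) ->
  (forall u y, (0 <= S u y)%R) -> (forall u, exists y, S u y = 0%R) ->
  is_argmin (fun uy : U * Y => e uy.1 + (phi uy.1 + S uy.1 uy.2)%:E) (u0, y0) <->
  is_argmin (fun u => e u + (phi u)%:E) u0 /\ S u0 y0 = 0%R.
Proof.
move=> eN [u1 eu1] S_ge0 S_zero; split=> [xmin|[umin S0] [u y] /=]; last first.
  by rewrite S0 addr0; apply: le_trans (umin u) _; rewrite leeD2l // lee_fin lerDl.
have fin0 : e u0 \is a fin_num.
  rewrite fin_numE eN /=; apply: contra eu1 => /eqP e0.
  have [y Sy] := S_zero u1; have := xmin (u1, y); rewrite /= e0 Sy.
  by case: (e u1) (eN u1).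
have S0 : S u0 y0 = 0%R.
  have [y Sy] := S_zero u0; have := xmin (u0, y); rewrite /= Sy addr0 leeD2lE // lee_fin.
  by rewrite gerDl => S_le0; apply/eqP; rewrite eq_le S_le0 S_ge0.
by split=> // u; have [y Sy] := S_zero u; have := xmin (u, y); rewrite /= Sy S0 !addr0.
Qed.

End Argmin.

Section Blocks.
Context {R : realType} (D : data R).
Local Notation p := (p D).

Lemma upd_eq (y : Ysp D) i yi : upd D y i yi i = yi.
Proof. by rewrite /upd; case: eqP => // e; rewrite (eq_irrelevance e erefl) castmx_id. Qed.

Lemma upd_neq (y : Ysp D) i yi k : k != i -> upd D y i yi k = y k.
Proof. by rewrite /upd eq_sym; case: eqP. Qed.

Lemma big_upd (V : zmodType) (F : forall k : 'I_p, 'cV[R]_(dY D k) -> V) y i yi :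
  \sum_k F k (upd D y i yi k) = F i yi + \sum_(k | k != i) F k (y k).
Proof. by rewrite (bigD1 i) //= upd_eq; congr (_ + _); apply: eq_bigr => k /upd_neq ->. Qed.

Lemma theta_addr i (y d : 'cV[R]_(dY D i)) : (Po D i)^T = Po D i ->
  theta D i (y + d) = theta D i y + 2^-1 * qn (Po D i) d - ip (bv D i - Po D i *m y) d.
Proof.
move=> sP; rewrite /theta /qn mulmxDr !(ipDl, ipDr, ipBl).
rewrite [ip y (_ *m d)]ip_mulmxr sP (ipC d (_ *m y)) ipNl; by field.
Qed.

Lemma ipW_addW (w a b : W D) : ipW D w (addW D a b) = ipW D w a + ipW D w b.
Proof.
rewrite /ipW /= ipDr (eq_bigr _ (fun k _ => ipDr _ _ _)) big_split /=; ring.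
Qed.

Lemma ipW_Fmap n (w : W D) x : ipW D w (Fmap D n x) = ip (Fstar D n w) x.
Proof.
rewrite /ipW /Fstar /= ipDl ip_mulmxr ip_suml; congr (_ + _).
by rewrite [RHS]big_mkcond; apply: eq_bigr => k _ /=; case: ifP; rewrite ?ip0r // ip_mulmxr.
Qed.

Lemma ipW_corr (i : 'I_p) w :
  ipW D w (corr D i.+1 w) = qn (invmx (Eth D i)) (Ao D i *m Fstar D i.+1 w).
Proof. by rewrite /corr /= valK ipW_Fmap ip_trmx_mulmxr /qn ipC. Qed.

Lemma Hat_trunc m w (k : 'I_p) : (m <= k)%N -> (Hat D m w).2 k = 0.
Proof.
have corr_trunc n : (n <= k.+1)%N -> (corr D n w).2 k = 0.
  by rewrite /corr; case: insub => //= i nk; rewrite ltnNge nk.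
elim: m => [|m IH] mk /=; first by rewrite corr_trunc ?addr0.
rewrite corr_trunc ?addr0 // IH ?(ltnW mk) // ifF //.
by apply/negbTE; rewrite neq_ltn mk orbT.
Qed.

Lemma ipW_Hat m (w : W D) :
  ipW D w (Hat D m w) = qn (Tf D) w.1
    + \sum_(k < p | (k < m)%N) qn (Ttheta D k) (w.2 k)
    + \sum_(n < m.+1) ipW D w (corr D n.+1 w).
Proof.
elim: m => [|m IH] /=.
  by rewrite ipW_addW big_ord1 big_pred0 // addr0 /ipW /= big1 ?addr0 // => k _; rewrite ip0r.
have diag : ipW D w ((Hat D m w).1,
    fun k : 'I_p => if (k == m :> nat) then Ttheta D k *m w.2 k else (Hat D m w).2 k)
  = ipW D w (Hat D m w) + \sum_(k < p | k == m :> nat) qn (Ttheta D k) (w.2 k).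
  rewrite /ipW /= -addrA (big_mkcond (fun k : 'I_p => k == m :> nat)) -big_split /=.
  congr (_ + _); apply: eq_bigr => k _.
  by case: eqP => [km|_]; rewrite ?addr0 // Hat_trunc ?km // ip0r add0r.
have splitS : \sum_(k < p | (k < m.+1)%N) qn (Ttheta D k) (w.2 k)
  = \sum_(k < p | (k < m)%N) qn (Ttheta D k) (w.2 k)
    + \sum_(k < p | k == m :> nat) qn (Ttheta D k) (w.2 k).
  rewrite (bigID (fun k : 'I_p => (k < m)%N)) /=; congr (_ + _); apply: eq_bigl => k.
    by rewrite ltnS; apply: andb_idl => /ltnW.
  by rewrite ltnS -leqNgt -eqn_leq.
rewrite ipW_addW diag IH [in RHS]big_ord_recr /= splitS; ring.
Qed.

Section SbarFixpoint.
Variables (xbar : 'cV[R]_(dX D)) (ybar : Ysp D) (gam : 'cV[R]_(dX D)).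
Local Notation sres := (sres D xbar ybar gam).
Local Notation sfun := (sfun D xbar ybar gam).

Lemma eq_sres (i : 'I_p) (s s' : 'I_p -> 'cV[R]_(dX D)) :
  (forall k : 'I_p, (i < k)%N -> s k = s' k) -> sres i s = sres i s'.
Proof.
by move=> ss'; rewrite /Defs.sres (eq_bigr (fun k => Ao D i *m s' k)) // => k /ss' ->.
Qed.

Lemma sfun_sres n (i : 'I_p) : (n <= p)%N -> (p - n <= i)%N -> sfun n i = sres i (sfun n).
Proof.
elim: n i => [|n IH] i np ni; first by move: (ltn_ord i) ni; lia.
have sfunS (k : 'I_p) : (i < k)%N -> sfun n.+1 k = sfun n k.
  by move=> ik /=; rewrite ifF //; apply/eqP; move: ni ik; lia.
have -> : sfun n.+1 i = if i == (p - n.+1)%N :> nat then sres i (sfun n) else sfun n i by [].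
case: eqP => [_|ni']; last (rewrite IH ?(ltnW np) //; last by move: ni ni'; lia).
all: by apply: eq_sres => k /sfunS ->.
Qed.

Lemma sbar_sres i : sbar D xbar ybar gam i = sres i (sbar D xbar ybar gam).
Proof. by rewrite /sbar sfun_sres // subnn. Qed.

End SbarFixpoint.

End Blocks.

Section Expansion.
Context {R : realType} {D : data R}.
Local Notation p := (p D).
Local Notation sg := (sigma D).
Context {ubar : 'cV[R]_(dU D)} {ybar : Ysp D} {vbar : 'cV[R]_(dV D)} {zbar : Zsp D}
  {xbar : 'cV[R]_(dX D)}.
Hypotheses (sP : forall i, (Po D i)^T = Po D i) (gfin : g D vbar \is a fin_num).

Definition Lrest (u : 'cV[R]_(dU D)) (y : Ysp D) : R :=
  \sum_i theta D i (y i) + (fine (g D vbar) + (\sum_j varphi D j (zbar j)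
   + ip xbar (Gamma D u y vbar zbar)
   + sg / 2 * ip (Gamma D u y vbar zbar) (Gamma D u y vbar zbar))).

Lemma Lsig_Lrest u y : Lsig D u y vbar zbar xbar = (f D u + (Lrest u y)%:E)%E.
Proof. by rewrite /Lsig /Lrest -(fineK gfin) -!addeA -!EFinD. Qed.

Definition gam := - Gamma D ubar ybar vbar zbar.
Definition dy (y : Ysp D) i := y i - ybar i.
Definition Ady (y : Ysp D) i : 'cV[R]_(dX D) := (Ao D i)^T *m dy y i.
Definition pre u (y : Ysp D) (i : 'I_p) : 'cV[R]_(dX D) :=
  (Fo D)^T *m (u - ubar) + \sum_(k < p | (k < i)%N) Ady y k.

Lemma Ady_bar i : Ady ybar i = 0.
Proof. by rewrite /Ady /dy subrr mulmx0. Qed.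

Lemma Gamma_dev u y :
  Gamma D u y vbar zbar = - gam + ((Fo D)^T *m (u - ubar) + \sum_i Ady y i).
Proof.
have shift (V : zmodType) (a b s t r1 r2 c : V) :
    a + s + r1 + r2 - c = b + t + r1 + r2 - c + ((a - b) + (s - t)).
  rewrite -!(addrA (b + t)) (addrC (r1 + r2 - c)) addrA (addrACA b).
  by rewrite (addrC b) (addrC t) !subrK !addrA.
rewrite /gam opprK /Gamma /Ady /dy (eq_bigr _ (fun i _ => mulmxBr _ _ _)) sumrB mulmxBr.
exact: shift.
Qed.

Definition rhs0 i : 'cV[R]_(dY D i) :=
  bv D i - Ao D i *m xbar - Po D i *m ybar i + sg *: (Ao D i *m gam).

Lemma Lrest_dev u y : Lrest u y = Lrest u ybar + \sum_i (2^-1 * qn (Po D i) (dy y i)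
  - ip (rhs0 i) (dy y i) + sg * ip (Ady y i) (pre u y i) + sg / 2 * ip (Ady y i) (Ady y i)).
Proof.
have theta_dev : \sum_i theta D i (y i) = \sum_i theta D i (ybar i)
    + \sum_i (2^-1 * qn (Po D i) (dy y i) - ip (bv D i - Po D i *m ybar i) (dy y i)).
  rewrite -big_split; apply: eq_bigr => i _ /=.
  by rewrite addrA -theta_addr // /dy addrC subrK.
have blocks : \sum_i (2^-1 * qn (Po D i) (dy y i) - ip (bv D i - Po D i *m ybar i) (dy y i))
    + \sum_i ip xbar (Ady y i)
    + sg / 2 * \sum_i (2 * ip (Ady y i) (- gam + (Fo D)^T *m (u - ubar)
                                + \sum_(k < p | (k < i)%N) Ady y k) + ip (Ady y i) (Ady y i))
  = \sum_i (2^-1 * qn (Po D i) (dy y i) - ip (rhs0 i) (dy y i)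
      + sg * ip (Ady y i) (pre u y i) + sg / 2 * ip (Ady y i) (Ady y i)).
  rewrite mulr_sumr -!big_split; apply: eq_bigr => i _ /=.
  have Ax : ip xbar (Ady y i) = ip (Ao D i *m xbar) (dy y i) by rewrite ip_trmx_mulmxr.
  have Ag : ip (Ady y i) gam = ip (Ao D i *m gam) (dy y i) by rewrite ipC ip_trmx_mulmxr.
  rewrite -(addrA (- gam)) -/(pre u y i) (ipDr (Ady y i)) ipNr Ag Ax /rhs0.
  by rewrite !(ipDl, ipBl, ipZl, ipNl); field.
rewrite /Lrest !Gamma_dev (eq_bigr _ (fun i _ => Ady_bar i)) big1_eq addr0.
rewrite !(addrA (- gam)) ip_self_addr_sum (ipDr xbar (- gam + _) (\sum_i Ady y i)) ip_sumr.
rewrite theta_dev -blocks; ring.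
Qed.

Hypothesis p_gt0 : (0 < p)%N.

Lemma Fstar_dev u y (i : 'I_p) :
  Fstar D i.+1 (truncW D p (u - ubar, fun k => y k - ybar k)) = pre u y i.
Proof.
rewrite /Fstar /pre /=; congr (_ + _); apply: eq_big => [k|k ki]; first by rewrite ltnS.
by rewrite ifT // (leq_ltn_trans _ (ltn_ord i)) // -ltnS.
Qed.

Lemma ipW_Hat_dev u y (w := truncW D p (u - ubar, fun k => y k - ybar k)) :
  ipW D w (Hat D p.-1 w) = qn (Tf D) (u - ubar)
    + \sum_(k < p | (k < p.-1)%N) qn (Ttheta D k) (dy y k)
    + \sum_i qn (invmx (Eth D i)) (Ao D i *m pre u y i).
Proof.
rewrite ipW_Hat prednK //; congr (_ + _ + _).
  by apply: eq_bigr => k kp; rewrite /= ifT // -ltn_predRL.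
by apply: eq_bigr => i _; rewrite ipW_corr Fstar_dev.
Qed.

Definition block u y i : R :=
  2^-1 * qn (Po D i) (dy y i) - ip (rhs0 i) (dy y i) + sg * ip (Ady y i) (pre u y i)
  + sg / 2 * ip (Ady y i) (Ady y i) + sg / 2 * qn (Ttheta D i) (dy y i)
  + sg / 2 * qn (invmx (Eth D i)) (Ao D i *m pre u y i).

Lemma joint_blocks u y (pl := last_block p_gt0)
    (w := truncW D p (u - ubar, fun k => y k - ybar k)) :
  Lrest u y + (sg / 2 * ipW D w (Hat D p.-1 w) + sg / 2 * qn (Ttheta D pl) (y pl - ybar pl))
  = Lrest u ybar + sg / 2 * qn (Tf D) (u - ubar) + \sum_i block u y i.
Proof.
have Tsplit : \sum_i qn (Ttheta D i) (dy y i)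
    = \sum_(k < p | (k < p.-1)%N) qn (Ttheta D k) (dy y k) + qn (Ttheta D pl) (dy y pl).
  rewrite (bigD1 pl) //= addrC; congr (_ + _); apply: eq_bigl => k.
  by rewrite -val_eqE /=; move: (ltn_ord k); lia.
have blocks : \sum_i block u y i = \sum_i (2^-1 * qn (Po D i) (dy y i) - ip (rhs0 i) (dy y i)
      + sg * ip (Ady y i) (pre u y i) + sg / 2 * ip (Ady y i) (Ady y i))
    + sg / 2 * \sum_i qn (Ttheta D i) (dy y i)
    + sg / 2 * \sum_i qn (invmx (Eth D i)) (Ao D i *m pre u y i).
  by rewrite !mulr_sumr -!big_split.
rewrite Lrest_dev /w ipW_Hat_dev -/(dy y pl) blocks Tsplit; ring.
Qed.

Hypotheses (pdE : forall i, pd (Eth D i)) (sg_gt0 : 0 < sg).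
Let sE i : (Eth D i)^T = Eth D i := proj1 (pdE i).
Let uE i : Eth D i \in unitmx := pd_unitmx (pdE i).

Local Notation sbar := (sbar D xbar ybar gam).
Local Notation delta := (deltabar D xbar ybar gam).

Definition rhs i : 'cV[R]_(dY D i) := rhs0 i - \sum_(k < p | (i < k)%N) Ao D i *m sbar k.

Lemma sbar_rhs i : sbar i = (Ao D i)^T *m (invmx (Eth D i) *m rhs i).
Proof.
rewrite sbar_sres /Defs.sres /rhs /rhs0; congr (_ *m (_ *m _)).
by set S := \sum_(k < p | _) _; rewrite 3!(addrAC _ (- S)).
Qed.

Definition center u y i : 'cV[R]_(dY D i) :=
  invmx (Eth D i) *m (sg^-1 *: rhs i - Ao D i *m pre u y i).

Definition gap u y : R := \sum_i sg / 2 * qn (Eth D i) (dy y i - center u y i).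

Lemma block_complete_square u y i : block u y i =
  sg / 2 * qn (Eth D i) (dy y i - center u y i) - (2 * sg)^-1 * qn (invmx (Eth D i)) (rhs i)
  + (ip (sbar i) (pre u y i) - ip (rhs0 i - rhs i) (dy y i)).
Proof.
by rewrite sbar_rhs addrA /block /Ady /Ttheta (complete_square _ _ _ _ (rhs i)) ?lt0r_neq0.
Qed.

(* After exchanging the double sum, the couplings A_i^* d_i . sbar_k (k > i) hidden
   in rhs0 - rhs cancel those coming from the prefix sums [pre]. *)
Lemma cross_cancel u y :
  \sum_(i < p) (ip (sbar i) (pre u y i) - ip (rhs0 i - rhs i) (dy y i)) = ip delta (u - ubar).
Proof.
have lower : \sum_(i < p) ip (rhs0 i - rhs i) (dy y i)
    = \sum_(i < p) \sum_(k < p | (i < k)%N) ip (sbar k) (Ady y i).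
  apply: eq_bigr => i _; rewrite /rhs subKr ip_suml; apply: eq_bigr => k _.
  by rewrite ipC ip_mulmxr ipC.
have upper : \sum_(i < p) \sum_(k < p | (k < i)%N) ip (sbar i) (Ady y k)
    = \sum_(i < p) \sum_(k < p | (i < k)%N) ip (sbar k) (Ady y i).
  rewrite (exchange_big_dep xpredT) //=.
rewrite sumrB lower /pre.
under eq_bigr do rewrite ipDr ip_sumr.
rewrite big_split /= upper addrK /deltabar /betaU ip_suml.
by apply: eq_bigr => i _; rewrite ip_trmx_mulmxr.
Qed.

Definition uobj u : R := Lrest u ybar + (ip delta u + sg / 2 * qn (Tf D) (u - ubar)).
Definition joint_cst : R :=
  - ip delta ubar - \sum_i (2 * sg)^-1 * qn (invmx (Eth D i)) (rhs i).

Definition joint_obj (uy : 'cV[R]_(dU D) * Ysp D) : \bar R :=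
  (Lsig D uy.1 uy.2 vbar zbar xbar
   + (sg / 2 * ipW D (truncW D p (uy.1 - ubar, fun k => uy.2 k - ybar k))
                    (Hat D p.-1 (truncW D p (uy.1 - ubar, fun k => uy.2 k - ybar k)))
      + sg / 2 * qn (Ttheta D (last_block p_gt0))
                    (uy.2 (last_block p_gt0) - ybar (last_block p_gt0)))%:E)%E.

Lemma joint_decomp u y : joint_obj (u, y) = (f D u + (uobj u + gap u y + joint_cst)%:E)%E.
Proof.
rewrite /joint_obj Lsig_Lrest -addeA -EFinD /= joint_blocks.
rewrite (eq_bigr _ (fun i _ => block_complete_square u y i)) big_split sumrB /=.
by rewrite cross_cancel /uobj /joint_cst /gap ipBr; congr (_ + _%:E)%E; ring.
Qed.

Definition subprob_center u y i : 'cV[R]_(dY D i) := invmx (Eth D i) *m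
  (sg^-1 *: (bv D i - Ao D i *m xbar - Po D i *m ybar i)
   - Ao D i *m Gamma D u (upd D y i (ybar i)) vbar zbar).

Lemma Gamma_upd u y i d : Gamma D u (upd D y i (ybar i + d)) vbar zbar
  = Gamma D u (upd D y i (ybar i)) vbar zbar + (Ao D i)^T *m d.
Proof.
rewrite /Gamma !(big_upd D _ (fun k v => (Ao D k)^T *m v)) mulmxDr.
set S := \sum_(k | k != i) _.
by rewrite (addrAC _ _ S) !addrA !(addrAC _ ((Ao D i)^T *m d)).
Qed.

Lemma Lrest_upd u y i : exists c, forall d,
  Lrest u (upd D y i (ybar i + d)) + sg / 2 * qn (Ttheta D i) d
  = c + sg / 2 * qn (Eth D i) (d - subprob_center u y i).
Proof.
rewrite /subprob_center; set G := Gamma D u _ vbar zbar.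
set r := bv D i - Ao D i *m xbar - Po D i *m ybar i.
exists (Lrest u (upd D y i (ybar i)) - (2 * sg)^-1 * qn (invmx (Eth D i)) r
  + ip ((Ao D i)^T *m (invmx (Eth D i) *m r)) G - sg / 2 * qn (invmx (Eth D i)) (Ao D i *m G)).
move=> d; have := complete_square (Eth D i) (Po D i) (Ao D i) r r d G sg.
rewrite ipBl subrr subr0 /Ttheta => /(_ (sE i) (uE i) (lt0r_neq0 sg_gt0)) cs.
have dev : Lrest u (upd D y i (ybar i + d)) = Lrest u (upd D y i (ybar i))
    + (2^-1 * qn (Po D i) d - ip r d + sg * ip ((Ao D i)^T *m d) G
       + sg / 2 * ip ((Ao D i)^T *m d) ((Ao D i)^T *m d)).
  have rE : ip r d = ip (bv D i - Po D i *m ybar i) d - ip (Ao D i *m xbar) d.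
    by rewrite /r !ipBl; ring.
  rewrite /Lrest Gamma_upd -/G !(big_upd D _ (theta D)) theta_addr //.
  rewrite ip_self_addr (ipDr xbar) (ip_trmx_mulmxr _ xbar) rE (ipC G); by field.
rewrite dev; lra.
Qed.

Lemma Gamma_blk u a b i : Gamma D u (blk D a b i (ybar i)) vbar zbar
  = - gam + (pre u a i + \sum_(k < p | (i < k)%N) Ady b k).
Proof.
rewrite Gamma_dev /pre -addrA; congr (_ + (_ + _)).
rewrite !(big_mkcond (fun k : 'I_p => (_ < _)%N)) -big_split; apply: eq_bigr => k _ /=.
case: (eqVneq k i) => [->|ki]; first by rewrite ltnn /Ady /dy /blk upd_eq subrr mulmx0 addr0.
rewrite /Ady /dy /blk upd_neq //; case: ltngtP => [_|_|e]; rewrite ?addr0 ?add0r //.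
by move/eqP: ki; case; apply: val_inj.
Qed.

Lemma subprob_center_blk u (a b : Ysp D) (i : 'I_p) :
  (forall k : 'I_p, (i < k)%N -> sg *: Ady b k = sbar k) ->
  subprob_center u (fun k => if (k < i)%N then a k else b k) i = center u a i.
Proof.
move=> bk; rewrite /subprob_center -[upd D _ i (ybar i)]/(blk D a b i (ybar i)) Gamma_blk.
have Sb : \sum_(k < p | (i < k)%N) Ao D i *m sbar k
    = sg *: (Ao D i *m \sum_(k < p | (i < k)%N) Ady b k).
  rewrite mulmx_sumr scaler_sumr; apply: eq_bigr => k ik.
  by rewrite -(bk k ik) linearZ.
rewrite /center /rhs /rhs0 Sb; congr (_ *m _).
rewrite [in RHS]scalerBr [in RHS]scalerDr !scalerA mulVf ?lt0r_neq0 // !scale1r.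
set Sb' := Ao D i *m \sum_(k < p | (i < k)%N) Ady b k.
by rewrite !mulmxDr mulmxN !opprD opprK !addrA !(addrAC _ (- Sb')).
Qed.

Definition ysub u (a b : Ysp D) (i : 'I_p) (yi : 'cV[R]_(dY D i)) : \bar R :=
  (Lsig D u (blk D a b i yi) vbar zbar xbar + (sg / 2 * qn (Ttheta D i) (yi - ybar i))%:E)%E.

Lemma is_argmin_blk u (a b : Ysp D) (i : 'I_p) x : f D u \is a fin_num ->
  is_argmin (ysub u a b i) x
  <-> x = ybar i + subprob_center u (fun k => if (k < i)%N then a k else b k) i.
Proof.
move=> fu; have [c cE] := Lrest_upd u (fun k => if (k < i)%N then a k else b k) i.
apply: (@is_argmin_quadratic _ _ _ _ _ c sg _ _ fu (pdE i) sg_gt0) => yi.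
rewrite /ysub Lsig_Lrest -addeA -EFinD; congr (_ + _%:E)%E.
have := cE (yi - ybar i); rewrite (addrC (ybar i)) subrK /blk => ->.
by rewrite opprD addrA.
Qed.

Lemma gap_term_ge0 u y i : 0 <= sg / 2 * qn (Eth D i) (dy y i - center u y i).
Proof. by rewrite mulr_ge0 ?(pd_qn_ge0 (pdE i)) // divr_ge0 // ltW. Qed.

Lemma gap_ge0 u y : 0 <= gap u y.
Proof. by apply: sumr_ge0 => i _; apply: gap_term_ge0. Qed.

Lemma gap_eq0 u y : gap u y = 0 <-> forall i, dy y i = center u y i.
Proof.
split=> [/eqP|yc]; last by rewrite /gap big1 // => i _; rewrite yc subrr qn0 mulr0.
rewrite psumr_eq0 => [/allP yc i|i _]; last exact: gap_term_ge0.
move: (yc i (mem_index_enum _)); rewrite implyTb mulf_eq0 gt_eqF ?divr_gt0 //=.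
by move=> /eqP/(pd_qn_eq0 (pdE i))/eqP; rewrite subr_eq0 => /eqP.
Qed.

Lemma eq_center u (y y' : Ysp D) (i : 'I_p) : (forall k : 'I_p, (k < i)%N -> y k = y' k) ->
  center u y i = center u y' i.
Proof.
by move=> yy'; rewrite /center /pre (eq_bigr (Ady y')) // => k /yy' ki; rewrite /Ady /dy ki.
Qed.

Fixpoint forward_sweep u n : Ysp D :=
  if n is n'.+1 then
    if insub n' is Some i then
      upd D (forward_sweep u n') i (ybar i + center u (forward_sweep u n') i)
    else forward_sweep u n'
  else ybar.

Lemma forward_sweep_center u n : (n <= p)%N -> forall i : 'I_p, (i < n)%N ->
  dy (forward_sweep u n) i = center u (forward_sweep u n) i.
Proof.
elim: n => [//|n IH] np i ni /=; case: insubP => [j _ jn|]; last by rewrite np.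
have sweep_lt (k : 'I_p) : (k < j)%N -> upd D (forward_sweep u n) j
    (ybar j + center u (forward_sweep u n) j) k = forward_sweep u n k.
  by move=> kj; rewrite upd_neq // -val_eqE /= ltn_eqF.
rewrite /dy; case: (eqVneq i j) => [->|ij].
  by rewrite upd_eq [_ - ybar j]addrC addKr; apply: eq_center => k /sweep_lt ->.
have i_lt : (i < n)%N by move: ni; rewrite -jn ltnS leq_eqVlt val_eqE (negbTE ij).
rewrite upd_neq // -/(dy _ i) IH ?(ltnW np) //.
by apply: eq_center => k ki; rewrite sweep_lt //; apply: ltn_trans ki _; rewrite jn.
Qed.

Lemma gap_attained u : exists y, gap u y = 0.
Proof. by exists (forward_sweep u p); apply/gap_eq0 => i; apply: forward_sweep_center. Qed.

Lemma Lrest_shift u y : Lrest u y - Lrest u ybar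
  = Lrest ubar y - Lrest ubar ybar + sg * ip (\sum_i Ady y i) ((Fo D)^T *m (u - ubar)).
Proof.
rewrite (Lrest_dev u y) (Lrest_dev ubar y) ![Lrest _ ybar + _]addrC !addrK.
rewrite ip_suml mulr_sumr -big_split /=; apply: eq_bigr => i _.
have -> : pre u y i = pre ubar y i + (Fo D)^T *m (u - ubar).
  by rewrite /pre subrr mulmx0 add0r addrC.
rewrite ipDr; ring.
Qed.

Lemma Lsig_ybar_delta u :
  (Lsig D u ybar vbar zbar xbar + (ip delta u + sg / 2 * qn (Tf D) (u - ubar))%:E)%E
  = (f D u + (uobj u + 0)%:E)%E.
Proof. by rewrite Lsig_Lrest -addeA -EFinD addr0. Qed.

Section BackwardSweep.
Context {y' : Ysp D}.
Hypotheses (ufin : f D ubar \is a fin_num)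
  (y'min : forall i, is_argmin (ysub ubar ybar y' i) (y' i)).

(* Downward induction on k: once the blocks above k satisfy the identity, the
   k-th subproblem of the backward sweep has centre sg^-1 E_k^-1 rhs_k. *)
Lemma Ady_backward_sweep k : sg *: Ady y' k = sbar k.
Proof.
suff back n : forall j : 'I_p, (p <= j + n)%N -> sg *: Ady y' j = sbar j.
  by apply: (back p); rewrite leq_addl.
elim: n => [|n IH] j jn; first by move: (ltn_ord j) jn; rewrite addn0; lia.
have pre0 : pre ubar ybar j = 0.
  by rewrite /pre subrr mulmx0 add0r big1 // => l _; apply: Ady_bar.
have := (is_argmin_blk ubar ybar y' j (y' j) ufin).1 (y'min j).
rewrite subprob_center_blk => [y'j|l jl]; last by apply: IH; lia.
rewrite /Ady /dy y'j [_ - ybar j]addrC addKr /center pre0 mulmx0 subr0 sbar_rhs.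
by rewrite -!scalemxAr scalerA mulfV ?lt0r_neq0 // scale1r.
Qed.

Lemma is_argmin_forward_gap u y : f D u \is a fin_num ->
  (forall i, is_argmin (ysub u y y' i) (y i)) <-> gap u y = 0.
Proof.
move=> fu; rewrite gap_eq0; split=> ymin i.
  have := (is_argmin_blk u y y' i (y i) fu).1 (ymin i).
  rewrite subprob_center_blk /dy => [->|k _]; last exact: Ady_backward_sweep.
  by rewrite [_ - ybar i]addrC addKr.
apply/(is_argmin_blk u y y' i (y i) fu); rewrite subprob_center_blk => [|k _].
  by rewrite -ymin /dy addrC subrK.
exact: Ady_backward_sweep.
Qed.

Lemma Lrest_backward u : Lrest u y' + sg / 2 * qn (Tf D) (u - ubar)
  = uobj u + (Lrest ubar y' - Lrest ubar ybar - ip delta ubar).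
Proof.
have dE : sg * ip (\sum_i Ady y' i) ((Fo D)^T *m (u - ubar)) = ip delta (u - ubar).
  rewrite -ipZl scaler_sumr (eq_bigr _ (fun k _ => Ady_backward_sweep k)) ip_suml.
  rewrite /deltabar /betaU ip_suml.
  by apply: eq_bigr => i _; rewrite ip_trmx_mulmxr.
have := Lrest_shift u y'; rewrite dE /uobj ipBr; lra.
Qed.

Lemma Lsig_backward u :
  (Lsig D u y' vbar zbar xbar + (sg / 2 * qn (Tf D) (u - ubar))%:E)%E
  = (f D u + (uobj u + (Lrest ubar y' - Lrest ubar ybar - ip delta ubar))%:E)%E.
Proof. by rewrite Lsig_Lrest -addeA -EFinD Lrest_backward. Qed.

Hypotheses (fN : forall u, f D u != -oo%E) (fP : exists u, f D u != +oo%E).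

Lemma is_argmin_joint uplus yplus (obj : 'cV[R]_(dU D) -> \bar R) (k : R) :
  (forall u, obj u = (f D u + (uobj u + k)%:E)%E) ->
  is_argmin joint_obj (uplus, yplus)
  <-> is_argmin obj uplus /\ forall i, is_argmin (ysub uplus yplus y' i) (yplus i).
Proof.
move=> objE.
have -> : joint_obj = fun uy => (f D uy.1 + (uobj uy.1 + gap uy.1 uy.2 + joint_cst)%:E)%E.
  by apply/funext => -[u y]; rewrite joint_decomp.
have -> : obj = fun u => (f D u + (uobj u + k)%:E)%E by apply/funext.
rewrite !is_argmin_addr_cst (is_argmin_add_nonneg _ _ _ _ _ fN fP gap_ge0 gap_attained).
split=> -[umin steps]; have ufin' := is_argmin_fin_num _ _ _ fN fP umin;
  by split=> //; apply/is_argmin_forward_gap.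
Qed.

End BackwardSweep.

End Expansion.

Theorem proposition3p1 (R : realType) (D : data R)
  (hp : (0 < p D)%N) (hq : (0 < q D)%N)
  (hf : closed_fun (f D) /\ proper_fun (f D) /\ convex_fun (f D))
  (hg : closed_fun (g D) /\ proper_fun (g D) /\ convex_fun (g D))
  (hP : forall i, psd (Po D i)) (hQ : forall j, psd (Qo D j))
  (hsigma : 0 < sigma D)
  (hE : forall i, pd (Eth D i))
  (hET : forall i, psd (Eth D i - ((sigma D)^-1 *: Po D i + Ao D i *m (Ao D i)^T)))
  (hTf : psd (Tf D))
  (ubar : 'cV[R]_(dU D)) (ybar : Ysp D) (vbar : 'cV[R]_(dV D)) (zbar : Zsp D)
  (xbar : 'cV[R]_(dX D))
  (hubar : f D ubar != +oo%E) (hvbar : g D vbar != +oo%E)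
  (y' : Ysp D)
  (hy' : forall i : 'I_(p D),
     is_argmin (fun yi : 'cV[R]_(dY D i) =>
        (Lsig D ubar (blk D ybar y' i yi) vbar zbar xbar
         + (sigma D / 2 * qn (Ttheta D i) (yi - ybar i))%:E)%E) (y' i))
  (uplus : 'cV[R]_(dU D)) (yplus : Ysp D) :
  let gambar := - Gamma D ubar ybar vbar zbar in
  let delta := deltabar D xbar ybar gambar in
  let pl := last_block hp in
  let joint := fun uy : 'cV[R]_(dU D) * Ysp D =>
     (Lsig D uy.1 uy.2 vbar zbar xbar
      + (sigma D / 2 *
           ipW D (truncW D (p D) (uy.1 - ubar, fun k => uy.2 k - ybar k))
                 (Hat D (p D).-1 (truncW D (p D) (uy.1 - ubar, fun k => uy.2 k - ybar k)))
         + sigma D / 2 * qn (Ttheta D pl) (uy.2 pl - ybar pl))%:E)%E in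
  let ysteps := forall i : 'I_(p D),
     is_argmin (fun yi : 'cV[R]_(dY D i) =>
        (Lsig D uplus (blk D yplus y' i yi) vbar zbar xbar
         + (sigma D / 2 * qn (Ttheta D i) (yi - ybar i))%:E)%E) (yplus i) in
  (is_argmin joint (uplus, yplus) <->
     (is_argmin (fun u : 'cV[R]_(dU D) =>
        (Lsig D u ybar vbar zbar xbar
         + (ip delta u + sigma D / 2 * qn (Tf D) (u - ubar))%:E)%E) uplus
      /\ ysteps))
  /\
  (is_argmin joint (uplus, yplus) <->
     (is_argmin (fun u : 'cV[R]_(dU D) =>
        (Lsig D u y' vbar zbar xbar
         + (sigma D / 2 * qn (Tf D) (u - ubar))%:E)%E) uplus
      /\ ysteps)).
Proof.
move=> gambar delta pl joint ysteps.
have sP i : (Po D i)^T = Po D i by case: (hP i).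
case: hf => _ [[fN fP] _]; case: hg => _ [[gN _] _].
have gfin : g D vbar \is a fin_num by rewrite fin_numE hvbar gN.
have ufin : f D ubar \is a fin_num by rewrite fin_numE hubar fN.
split; apply: (is_argmin_joint sP gfin hp hE hsigma ufin hy' fN fP) => u.
  exact: Lsig_ybar_delta.
exact: Lsig_backward.
Qed.
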